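(* Let $p,q$ be primes and $r\ge1$. Every group of the form $\mathbb{Z}_{p^r}\rtimes_\phi\mathbb{Z}_q$ belongs, up to isomorphism, to one of the following five classes: Class 1: the groups $\mathbb{Z}_{p^r}\rtimes_\phi\mathbb{Z}_q$ with $q\mid p-1$, $r\ge1$ and $\phi(1)(1)\neq1$ (the $q$-hedral groups); Class 2: the dihedral groups $D_{2^r}=\langle x,y\mid x^{2^r}=y^2=e,\ yx=x^{2^r-1}y\rangle$ for $r\ge2$; Class 3: the quasi-dihedral groups $QD_{2^r}=\langle x,y\mid x^{2^r}=y^2=e,\ yx=x^{2^{r-1}-1}y\rangle$ for $r>2$; Class 4: the groups $P_{p,r}=\langle x,y\mid x^{p^r}=y^p=e,\ yx=x^{p^{r-1}+1}y\rangle$ for $p$ prime and $r\ge2$, excluding the case $p=r=2$; Class 5: the direct products $\mathbb{Z}_{p^r}\times\mathbb{Z}_q$ for $p,q$ prime and $r\ge1$. Moreover, these five classes are disjoint (no group in one class is isomorphic to a group in another class).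
   Context: For positive integers $n,q$ and a group homomorphism $\phi$ from $\mathbb{Z}_q$ to the automorphism group of the additive group $\mathbb{Z}_n$, the semi-direct product $\mathbb{Z}_n\rtimes_\phi\mathbb{Z}_q$ is the set $\{(a,b): a\in\mathbb{Z}_n, b\in\mathbb{Z}_q\}$ with product $(a_1,b_1)(a_2,b_2)=(a_1+\phi(b_1)(a_2),\,b_1+b_2)$. Such $\phi$ is determined by $\phi(1)(1)\in\mathbb{Z}_n^\ast$, with $\phi(1)(1)^q\equiv1\pmod n$ and $\phi(b)(a)=a\,\phi(1)(1)^b$; the choice $\phi(1)(1)=1$ gives the direct product. *)

From HB Require Import structures.
From mathcomp Require Import all_boot all_order all_algebra all_fingroup.

Set Implicit Arguments.
Unset Strict Implicit.
Unset Printing Implicit Defensive.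

Import GRing.Theory.

(* The homomorphism phi : Z_q -> Aut(Z_n) is encoded by a = phi(1)(1) in Z_n
   with a^q = 1 (which forces a to be a unit); phi(b)(x) = x * a^b. *)
Record phi_data (n q : nat) := PhiData {
  phi1 : 'Z_n;
  phi1_ok : (1 < q) && (phi1 ^+ q == 1)%R
}.

(* Carrier of Z_n \rtimes_phi Z_q : pairs (a, b); the type depends on phi. *)
Definition sdpT (n q : nat) (u : phi_data n q) : Type := ('Z_n * 'Z_q)%type.

Section SemiDirect.
Variables (n q : nat) (u : phi_data n q).

HB.instance Definition _ := Finite.on (sdpT u).
Local Notation sdpT := (sdpT u).

Local Notation a := (phi1 u).

Definition sdp_mul (x y : sdpT) : sdpT :=
  ((x.1 + y.1 * a ^+ (x.2 : nat))%R, (x.2 + y.2)%R).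
Definition sdp_one : sdpT := (0%R, 0%R).
Definition sdp_inv (x : sdpT) : sdpT :=
  ((- (x.1 * a ^+ nat_of_ord (- x.2)%R))%R, (- x.2)%R).

Lemma sdp_q : (Zp_trunc q).+2 = q.
Proof. by case/andP: (phi1_ok u) => q1 _; rewrite Zp_cast. Qed.

Lemma sdp_expa m : (a ^+ (m %% q) = a ^+ m)%R.
Proof.
case/andP: (phi1_ok u) => _ /eqP aq.
by rewrite {2}(divn_eq m q) GRing.exprD mulnC GRing.exprM aq GRing.expr1n GRing.mul1r.
Qed.

Lemma sdp_expa' m : (a ^+ (m %% (Zp_trunc q).+2) = a ^+ m)%R.
Proof. by rewrite sdp_q sdp_expa. Qed.

Lemma sdp_mulA : associative sdp_mul.
Proof.
move=> [x1 b1] [x2 b2] [x3 b3]; rewrite /sdp_mul /=; congr (_, _);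
  last by rewrite GRing.addrA.
rewrite sdp_expa' GRing.exprD GRing.mulrDl -!GRing.addrA.
by rewrite -GRing.mulrA [(a ^+ b2 * _)%R]GRing.mulrC.
Qed.

Lemma sdp_mul1 : left_id sdp_one sdp_mul.
Proof.
by move=> [x b]; rewrite /sdp_mul /= GRing.expr0 GRing.mulr1 !GRing.add0r.
Qed.

Lemma sdp_mulV : left_inverse sdp_one sdp_inv sdp_mul.
Proof.
move=> [x b]; rewrite /sdp_mul /sdp_inv /=.
by rewrite GRing.addNr GRing.addrC GRing.addrN.
Qed.

HB.instance Definition _ := Finite_isGroup.Build sdpT sdp_mulA sdp_mul1 sdp_mulV.

End SemiDirect.

Definition semidirect (n q : nat) (u : phi_data n q) : {set sdpT u} :=
  [set: sdpT u].

Local Open Scope group_scope.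

Definition class1 (gT : finGroupType) (G : {set gT}) : Prop :=
  exists (p q r : nat) (u : phi_data (p ^ r)%N q),
    [/\ prime p, prime q, (0 < r)%N, (q %| p.-1)%N & phi1 u != 1%R] /\
    G \isog semidirect u.

Definition class2 (gT : finGroupType) (G : {set gT}) : Prop :=
  exists r : nat, (2 <= r)%N /\
    G \isog Grp (x : y : x ^+ (2 ^ r)%N, y ^+ 2, y * x = x ^+ (2 ^ r - 1)%N * y).

Definition class3 (gT : finGroupType) (G : {set gT}) : Prop :=
  exists r : nat, (2 < r)%N /\
    G \isog Grp (x : y : x ^+ (2 ^ r)%N, y ^+ 2,
                         y * x = x ^+ (2 ^ (r - 1) - 1)%N * y).

Definition class4 (gT : finGroupType) (G : {set gT}) : Prop :=
  exists p r : nat, [/\ prime p, (2 <= r)%N & ~ (p = 2 /\ r = 2)%N] /\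
    G \isog Grp (x : y : x ^+ (p ^ r)%N, y ^+ p,
                         y * x = x ^+ (p ^ (r - 1) + 1)%N * y).

Definition class5 (gT : finGroupType) (G : {set gT}) : Prop :=
  exists p q r : nat, [/\ prime p, prime q & (0 < r)%N] /\
    G \isog [set: ('Z_(p ^ r)%N * 'Z_q)%type].

From mathcomp Require Import all_boot all_order all_algebra all_fingroup.
From mathcomp Require Import all_solvable zify.

(** If phi(1)(1) = 1 the product is direct (class 5). Otherwise phi(1)(1) is a
    unit of prime order q of Z_{p^r}, so q divides the totient p^(r-1)(p-1).
    If q divides p-1 the group is in class 1; if not, q = p and the group is a
    non-abelian p-group with the cyclic subgroup Z_{p^r} of index p. By the
    classification of such extremal p-groups it is modular (class 4),
    dihedral (class 2), semidihedral (class 3) or generalized quaternion; the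
    last is impossible since (0,1) is an involution outside Z_{p^r}, while a
    generalized quaternion group has a unique involution.
    Disjointness: class 5 is abelian and the others are not; classes 2, 3 and 4
    are distinguished by their extremal type, and class 1 is not extremal, as
    its order p^r q, with q < p, is not a prime power. *)

Set Implicit Arguments.
Unset Strict Implicit.
Unset Printing Implicit Defensive.

Import GRing.Theory.

Local Open Scope group_scope.

Lemma Zp_nat_eq0 m k : (1 < m)%N -> ((k%:R : 'Z_m) == 0)%R = (m %| k)%N.
Proof. by move=> m_gt1; rewrite -val_eqE /= val_Zp_nat. Qed.

Lemma pfactor_gt1 p r : prime p -> (0 < r)%N -> (1 < p ^ r)%N.
Proof. by move=> p_pr r_gt0; rewrite (ltn_exp2l 0) // prime_gt1. Qed.

Lemma prime_order_dvd_totient m k (b : 'Z_m) :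
  (1 < m)%N -> prime k -> (b ^+ k = 1)%R -> b != 1%R -> (k %| totient m)%N.
Proof.
move=> m_gt1 k_pr bk1 b_neq1.
have Ub : b \is a GRing.unit by rewrite -(unitrX_pos _ (prime_gt0 k_pr)) bk1 unitr1.
pose v := FinRing.unit _ Ub.
have vk1 : v ^+ k = 1 by apply: val_inj; rewrite FinRing.val_unitX bk1.
have v_neq1 : v != 1 by apply: contra b_neq1 => /eqP/(congr1 val) /= ->.
rewrite -card_units_Zp ?(ltnW m_gt1) // -(nt_prime_order k_pr vk1 v_neq1).
by rewrite order_dvdG ?inE.
Qed.

Lemma prime_dvd_totient_pfactor p k r : prime p -> prime k -> (0 < r)%N ->
  (k %| totient (p ^ r))%N -> ~~ (k %| p.-1)%N -> k = p.
Proof.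
move=> p_pr k_pr r_gt0; rewrite totient_pfactor // Euclid_dvdM // => /orP[-> //|].
by rewrite Euclid_dvdX // dvdn_prime2 // => /andP[/eqP].
Qed.

Lemma homGrp_mul_conj rT (H : {group rT}) m l k :
  (H \homg Grp (x : y : x ^+ m, y ^+ l, y * x = x ^+ k * y)) =
  (H \homg Grp (x : y : x ^+ m, y ^+ l, x ^ y = x ^+ k)).
Proof.
apply/existsP/existsP => -[[x y]] /=; rewrite !xpair_eqE;
  case/and4P => /eqP defH xm yl /eqP rel; exists (x, y^-1);
  rewrite /= !xpair_eqE cycleV defH xm expgVn (eqP yl) invg1 !eqxx /=.
  by apply/eqP; rewrite conjgE invgK mulgA rel mulgK.
by apply/eqP; rewrite -rel conjgE mulgA mulgK.
Qed.

Lemma homGrp_mul_conjV rT (H : {group rT}) m l : (0 < m)%N ->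
  (H \homg Grp (x : y : x ^+ m, y ^+ l, y * x = x ^+ (m - 1) * y)) =
  (H \homg Grp (x : y : x ^+ m, y ^+ l, x ^ y = x^-1)).
Proof.
move=> m_gt0; rewrite homGrp_mul_conj; apply: eq_existsb => -[x y] /=.
rewrite !xpair_eqE; congr (_ && _); apply: andb_id2l => /eqP xm1.
congr (_ && (_ == _)); apply/eqP.
by rewrite eq_sym eq_invg_mul -expgS subn1 prednK // xm1.
Qed.

Lemma isoGrp_isog gT hT (G : {group gT}) (K : {group hT}) P :
  G \isog Grp P -> K \isog Grp P -> G \isog K.
Proof.
move=> isoG isoK.
by rewrite isogEhom isoK -isoG homg_refl isoG -isoK homg_refl.
Qed.

Section ExtremalClasses.

Variables (gT : finGroupType) (G : {group gT}).

Lemma extremal_class_pgroup :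
  extremal_class G != NotExtremal -> exists2 p, prime p & p.-group G.
Proof.
rewrite /pgroup; case cG: (extremal_class G) => // _.
- case/modular_group_classP: cG => p p_pr [n n_ge isoM]; exists p => //.
  have n_gt2 : (2 < n)%N := leq_trans (leq_addl _ _) n_ge.
  by rewrite (card_isog isoM) card_modular_group // pnatX pnat_id.
- case/dihedral_classP: cG => n n_gt1 isoD; exists 2 => //.
  by rewrite (card_isog isoD) card_2dihedral // pnatX pnat_id.
- case/semidihedral_classP: cG => n n_gt3 isoSD; exists 2 => //.
  by rewrite (card_isog isoSD) card_semidihedral // pnatX pnat_id.
case/quaternion_classP: cG => n n_gt2 isoQ; exists 2 => //.
by rewrite (card_isog isoQ) card_quaternion // pnatX pnat_id.
Qed.

Lemma dihedral_nonabelian n :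
  (2 < n)%N -> G \isog [set: 'D_(2 ^ n)] -> ~~ abelian G.
Proof.
move=> n_gt2 isoD; have n_gt1 := ltnW n_gt2.
have [[x y] genG _] := generators_2dihedral n_gt1 isoD.
have [_ [_ _ _ nilG] _ _ _] := dihedral2_structure n_gt1 genG isoD.
by rewrite -nil_class1 nilG -ltnNge; lia.
Qed.

Lemma nonabelian_dihedral_class : extremal_class G = Dihedral -> ~~ abelian G ->
  exists2 n, (2 < n)%N & G \isog [set: 'D_(2 ^ n)].
Proof.
case/dihedral_classP => n n_gt1 isoD not_cGG; exists n => //.
rewrite ltn_neqAle n_gt1 andbT; apply: contra not_cGG => /eqP n2.
apply: (@card_p2group_abelian _ 2) => //.
by rewrite (card_isog isoD) card_2dihedral // n2.
Qed.

Lemma semidihedral_nonabelian : extremal_class G = SemiDihedral -> ~~ abelian G.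
Proof.
case/semidihedral_classP => n n_gt3 isoSD.
have [[x y] genG [oy _]] := generators_semidihedral n_gt3 isoSD.
have [_ [_ _ _ nilG] _ _ _] := semidihedral_structure n_gt3 genG isoSD oy.
by rewrite -nil_class1 nilG -ltnNge; lia.
Qed.

Lemma modular_group_nonabelian : extremal_class G = ModularGroup -> ~~ abelian G.
Proof.
case/modular_group_classP => p p_pr [n n_ge isoM].
have n_gt2 : (2 < n)%N := leq_trans (leq_addl _ _) n_ge.
have [[x y] genG modG] := generators_modular_group p_pr n_gt2 isoM.
by have [[_ not_cGG _] _ _ _ _] := modular_group_structure p_pr n_gt2 genG isoM modG.
Qed.

Lemma quaternion_involution_uniq : extremal_class G = Quaternion ->
  {in G &, forall z t, #[z] = 2 -> #[t] = 2 -> z = t}.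
Proof.
case/quaternion_classP => n n_gt2 isoQ.
have [[x y] genG _] := generators_quaternion n_gt2 isoQ.
have [_ _ [_ _ involG _ _] _ _] := quaternion_structure n_gt2 genG isoQ.
by move=> z t Gz Gt oz ot; rewrite (involG z Gz oz) (involG t Gt ot).
Qed.

Lemma class2_dihedral :
  class2 G <-> exists2 n, (2 < n)%N & G \isog [set: 'D_(2 ^ n)].
Proof.
split=> [[r [r_ge2 isoG]] | [n n_gt2 isoD]].
  have n_gt1 : (1 < r.+1)%N by rewrite ltnS ltnW.
  exists r.+1 => //; apply: isoGrp_isog (Grp_2dihedral n_gt1) => rT H.
  by rewrite isoG homGrp_mul_conjV ?expn_gt0.
have n_gt1 := ltnW n_gt2.
exists n.-1; split; first lia.
move=> rT H; rewrite (isoGrp_trans isoD (Grp_2dihedral n_gt1)).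
by rewrite homGrp_mul_conjV ?expn_gt0.
Qed.

Lemma class3_semidihedral : class3 G <-> extremal_class G = SemiDihedral.
Proof.
split=> [[r [r_gt2 isoG]] | /semidihedral_classP[n n_gt3 isoSD]].
  have n_gt3 : (3 < r.+1)%N by [].
  apply/semidihedral_classP; exists r.+1 => //.
  apply: isoGrp_isog (Grp_semidihedral n_gt3) => rT H.
  by rewrite isoG homGrp_mul_conj !subn1.
exists n.-1; split; first lia.
move=> rT H; rewrite (isoGrp_trans isoSD (Grp_semidihedral n_gt3)).
by rewrite homGrp_mul_conj !subn1.
Qed.

Lemma class4_modular : class4 G <-> extremal_class G = ModularGroup.
Proof.
split=> [[p [r [[p_pr r_ge2 not22] isoG]]] | /modular_group_classP].
  have n_gt2 : (2 < r.+1)%N by [].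
  apply/modular_group_classP; exists p => //; exists r.+1.
    by case: eqP => [p2|_] /=; [move: not22; rewrite p2; lia | lia].
  apply: isoGrp_isog (Grp_modular_group p_pr n_gt2) => rT H.
  by rewrite isoG homGrp_mul_conj subn1 addn1.
case=> p p_pr [n n_ge isoM].
have n_gt2 : (2 < n)%N := leq_trans (leq_addl _ _) n_ge.
exists p, n.-1; split.
  split=> // [|[p2 n3]]; first lia.
  by move: n_ge; rewrite p2 /=; lia.
move=> rT H; rewrite (isoGrp_trans isoM (Grp_modular_group p_pr n_gt2)).
by rewrite homGrp_mul_conj subn1 addn1.
Qed.

End ExtremalClasses.

Section SemidirectProduct.

Variables (n q : nat) (u : phi_data n q).
Hypothesis n_gt1 : (1 < n)%N.
Local Notation a := (phi1 u).

Lemma phi_data_q_gt1 : (1 < q)%N.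
Proof. by case/andP: (phi1_ok u). Qed.

Lemma phi1X_q : (a ^+ q = 1)%R.
Proof. by case/andP: (phi1_ok u) => _ /eqP. Qed.

Lemma sdp_mulE (x y : sdpT u) :
  x * y = ((x.1 + y.1 * a ^+ (x.2 : nat))%R, (x.2 + y.2)%R).
Proof. by []. Qed.

Definition sdp_x : sdpT u := (1%R, 0%R).
Definition sdp_y : sdpT u := (0%R, 1%R).

Lemma expg_sdp_x k : sdp_x ^+ k = (k%:R, 0)%R.
Proof.
elim: k => [|k IHk] //.
by rewrite expgSr IHk sdp_mulE /= expr0 mulr1 addr0 -natr1.
Qed.

Lemma expg_sdp_y k : sdp_y ^+ k = (0, k%:R)%R.
Proof.
elim: k => [|k IHk] //.
by rewrite expgSr IHk sdp_mulE /= mul0r addr0 -natr1.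
Qed.

Lemma order_sdp_x : #[sdp_x] = n.
Proof.
apply/eqP; rewrite eqn_dvd order_dvdn expg_sdp_x -[1]/(0, 0)%R xpair_eqE.
rewrite Zp_nat_eq0 // dvdnn eqxx /=.
by have := expg_order sdp_x; rewrite expg_sdp_x => -[/eqP]; rewrite Zp_nat_eq0.
Qed.

Lemma order_sdp_y : #[sdp_y] = q.
Proof.
have q_gt1 := phi_data_q_gt1.
apply/eqP; rewrite eqn_dvd order_dvdn expg_sdp_y -[1]/(0, 0)%R xpair_eqE.
rewrite Zp_nat_eq0 // dvdnn eqxx /=.
by have := expg_order sdp_y; rewrite expg_sdp_y => -[/eqP]; rewrite Zp_nat_eq0.
Qed.

Lemma card_semidirect : #|semidirect u| = (n * q)%N.
Proof. by rewrite cardsT card_prod !card_ord !Zp_cast // phi_data_q_gt1. Qed.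

Lemma index_cycle_sdp_x : #|semidirect u : <[sdp_x]>| = q.
Proof.
rewrite -divgS ?subsetT // -orderE order_sdp_x card_semidirect mulKn //.
exact: ltnW.
Qed.

Lemma sdp_y_notin_cycle : sdp_y \notin <[sdp_x]>.
Proof.
by apply/cycleP => -[k]; rewrite expg_sdp_x => -[_]; rewrite modn_small.
Qed.

Lemma semidirect_nonabelian : a != 1%R -> ~~ abelian (semidirect u).
Proof.
apply: contra => /centsP/(_ sdp_x (in_setT _) sdp_y (in_setT _)).
move/(congr1 fst); rewrite !sdp_mulE /= mul0r addr0 add0r mul1r.
by rewrite modn_small => [->|].
Qed.

Lemma semidirect_isog_prod : a = 1%R -> semidirect u \isog [set: 'Z_n * 'Z_q].
Proof.
move=> a1; pose f : sdpT u -> 'Z_n * 'Z_q := id.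
have fM : {in semidirect u &, {morph f : x y / x * y}}.
  by move=> x y _ _; rewrite /f sdp_mulE a1 expr1n mulr1.
apply: (isom_isog (Morphism fM)) => //; apply/isomP; split.
  by apply/injmP => x y _ _.
by rewrite morphimEdom; apply/setP => z; rewrite !inE; apply/imsetP; exists z.
Qed.

Lemma semidirect_not_quaternion :
  q = 2 -> (2 %| n)%N -> extremal_class (semidirect u) != Quaternion.
Proof.
move=> q2 /dvdnP[k def_n]; apply/eqP => /quaternion_involution_uniq involG.
have k_gt0 : (0 < k)%N by move: n_gt1; rewrite def_n; lia.
have oxk : #[sdp_x ^+ k] = 2.
  by rewrite orderXdiv order_sdp_x def_n ?mulKn ?dvdn_mulr.
have oy : #[sdp_y] = 2 by rewrite order_sdp_y.
case/negP: sdp_y_notin_cycle.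
by rewrite (involG sdp_y (sdp_x ^+ k)) ?mem_cycle ?inE.
Qed.

End SemidirectProduct.

Lemma semidirect_pfactor_classes p r (u : phi_data (p ^ r) p) :
    prime p -> (0 < r)%N -> phi1 u != 1%R ->
  class2 (semidirect u) \/ class3 (semidirect u) \/ class4 (semidirect u).
Proof.
move=> p_pr r_gt0 a_neq1; have n_gt1 := pfactor_gt1 p_pr r_gt0.
have pG : p.-group (semidirect u).
  by rewrite /pgroup card_semidirect // -expnSr pnatX pnat_id.
have not_cGG := semidirect_nonabelian a_neq1.
have := maximal_cycle_extremal pG not_cGG (cycle_cyclic (sdp_x u)) (subsetT _)
  (index_cycle_sdp_x u n_gt1).
case cG: (extremal_class (semidirect u)) => /=.
- by move=> _; right; right; apply/class4_modular.
- by move=> _; left; apply/class2_dihedral/nonabelian_dihedral_class.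
- by move=> _; right; left; apply/class3_semidihedral.
- case/andP=> /eqP p2 _; have two_dvd_n : (2 %| p ^ r)%N by rewrite -p2 dvdn_exp.
  by have := semidirect_not_quaternion u n_gt1 p2 two_dvd_n; rewrite cG.
by rewrite /extremal2 cG andbF.
Qed.

Lemma semidirect_classes p q r (u : phi_data (p ^ r) q) :
    prime p -> prime q -> (0 < r)%N ->
  class1 (semidirect u) \/ class2 (semidirect u) \/ class3 (semidirect u) \/
  class4 (semidirect u) \/ class5 (semidirect u).
Proof.
move=> p_pr q_pr r_gt0; have n_gt1 := pfactor_gt1 p_pr r_gt0.
have [a1 | a_neq1] := eqVneq (phi1 u) 1%R.
  by do 4!right; exists p, q, r; split=> //; apply: semidirect_isog_prod.
have [q_dvd | q_ndvd] := boolP (q %| p.-1)%N.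
  by left; exists p, q, r, u; split=> //; apply: isog_refl.
have q_dvd_phi := prime_order_dvd_totient n_gt1 q_pr (phi1X_q u) a_neq1.
have qp := prime_dvd_totient_pfactor p_pr q_pr r_gt0 q_dvd_phi q_ndvd.
subst q; have := semidirect_pfactor_classes p_pr r_gt0 a_neq1; tauto.
Qed.

Section ClassInvariants.

Variables (gT : finGroupType) (G : {group gT}).

Lemma class1_nonabelian : class1 G -> ~~ abelian G.
Proof.
case=> p [q [r [u [[_ _ _ _ a_neq1] isoG]]]].
by rewrite (isog_abelian isoG) semidirect_nonabelian.
Qed.

Lemma class1_not_pgroup p : class1 G -> prime p -> ~~ p.-group G.
Proof.
case=> p0 [q [r [u [[p0_pr q_pr r_gt0 q_dvd _] isoG]]]] p_pr.
rewrite /pgroup (card_isog isoG) card_semidirect ?pfactor_gt1 //.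
rewrite pnatM pnatX !pnatE // !inE eqn0Ngt r_gt0 orbF.
apply/andP => -[/eqP p0p /eqP qp].
have p0_gt1 := prime_gt1 p0_pr.
have : (p0 <= p0.-1)%N by apply: dvdn_leq; [lia | rewrite {1}p0p -qp].
lia.
Qed.

Lemma class1_not_extremal : class1 G -> extremal_class G = NotExtremal.
Proof.
move=> c1G; apply/eqP; apply/negPn/negP => /extremal_class_pgroup[p p_pr pG].
by case/negP: (class1_not_pgroup c1G p_pr).
Qed.

Lemma class5_abelian : class5 G -> abelian G.
Proof.
case=> p [q [r [_ isoG]]]; rewrite (isog_abelian isoG).
by apply/centsP => -[x1 x2] _ [y1 y2] _; congr (_, _); apply: addrC.
Qed.

End ClassInvariants.

Lemma classes_disjoint (gT : finGroupType) (G : {group gT}) :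
  ~ (class1 G /\ class2 G) /\ ~ (class1 G /\ class3 G) /\
  ~ (class1 G /\ class4 G) /\ ~ (class1 G /\ class5 G) /\
  ~ (class2 G /\ class3 G) /\ ~ (class2 G /\ class4 G) /\
  ~ (class2 G /\ class5 G) /\ ~ (class3 G /\ class4 G) /\
  ~ (class3 G /\ class5 G) /\ ~ (class4 G /\ class5 G).
Proof.
have ext1 := @class1_not_extremal _ G.
have ext2 : class2 G -> extremal_class G = Dihedral.
  case/class2_dihedral => n n_gt2 isoD.
  by apply/dihedral_classP; exists n => //; apply: ltnW.
have ext3 : class3 G -> extremal_class G = SemiDihedral by case: (class3_semidihedral G).
have ext4 : class4 G -> extremal_class G = ModularGroup by case: (class4_modular G).
have nab1 := @class1_nonabelian _ G.
have nab2 : class2 G -> ~~ abelian G by case/class2_dihedral => n; apply: dihedral_nonabelian.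
have nab3 : class3 G -> ~~ abelian G by move/ext3/semidihedral_nonabelian.
have nab4 : class4 G -> ~~ abelian G by move/ext4/modular_group_nonabelian.
have ab5 := @class5_abelian _ G.
split; first by case=> /ext1 e /ext2; rewrite e.
split; first by case=> /ext1 e /ext3; rewrite e.
split; first by case=> /ext1 e /ext4; rewrite e.
split; first by case=> /nab1/negP nab /ab5.
split; first by case=> /ext2 e /ext3; rewrite e.
split; first by case=> /ext2 e /ext4; rewrite e.
split; first by case=> /nab2/negP nab /ab5.
split; first by case=> /ext3 e /ext4; rewrite e.
split; first by case=> /nab3/negP nab /ab5.
by case=> /nab4/negP nab /ab5.
Qed.

Theorem theorem1 :
  (forall (p q r : nat) (u : phi_data (p ^ r) q),
      prime p -> prime q -> 0 < r ->
      class1 (semidirect u) \/ class2 (semidirect u) \/ class3 (semidirect u) \/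
      class4 (semidirect u) \/ class5 (semidirect u)) /\
  (forall (gT : finGroupType) (G : {group gT}),
      ~ (class1 G /\ class2 G) /\ ~ (class1 G /\ class3 G) /\
      ~ (class1 G /\ class4 G) /\ ~ (class1 G /\ class5 G) /\
      ~ (class2 G /\ class3 G) /\ ~ (class2 G /\ class4 G) /\
      ~ (class2 G /\ class5 G) /\ ~ (class3 G /\ class4 G) /\
      ~ (class3 G /\ class5 G) /\ ~ (class4 G /\ class5 G)).
Proof. by split; [apply: semidirect_classes | apply: classes_disjoint]. Qed.
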